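(* Let $n\in\mathbb N$, $r\ge2$, and $\underline m=(m_1,\dots,m_n)\in\mathbb N^n$ with $\gcd(m_i,r)=1$ for all $i$. In the graph $L_{2n-1}\times_{\underline m}\mathbb Z_r$: (i) for $i,j$ with $i+1\le j\le n$, the number of $1$-step $0$-simple paths from $(v_i,0)$ to $(v_j,0)$ is $r$; (ii) for $i,j$ with $i+2\le j\le n$, the number of $2$-step $0$-simple paths from $(v_i,0)$ to $(v_j,0)$ is $\frac{r(r-1)}{2}(j-i-1)$; (iii) for each $i$ with $i+3\le n$, the number of $3$-step $0$-simple paths from $(v_i,0)$ to $(v_{i+3},0)$ is congruent to $-m_{i+2}^{-1}m_{i+1}\frac{r(r-1)(r-2)}{3}$ modulo $r$. Consequently, the number of $0$-simple paths from $(v_i,0)$ to $(v_{i+2},0)$ is $\frac{r(r+1)}{2}$, and the number of $0$-simple paths from $(v_i,0)$ to $(v_{i+3},0)$ is congruent to $-m_{i+2}^{-1}m_{i+1}\frac{r(r-1)(r-2)}{3}$ modulo $r$.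
   Context: $L_{2n-1}\times_{\underline m}\mathbb Z_r$ is the directed graph with vertices $(v_i,k)$ and edges $(e_{i,j},k)$ for $1\le i\le j\le n$, $k\in\mathbb Z_r$, where $s(e_{i,j},k)=(v_i,k-m_i)$ and $r(e_{i,j},k)=(v_j,k)$. A path $\alpha=(e_{i_1,j_1},k_1)\cdots(e_{i_\ell,j_\ell},k_\ell)$ is $0$-simple if $k_1=m_{i_1}$, $k_a\ne0$ for $a\ne\ell$, and $k_\ell=0$ (so it starts at $(v_{i_1},0)$ and ends at $(v_{j_\ell},0)$). A $0$-simple path $\alpha$ is $k$-step if there are integers $t_1<t_2<\dots<t_{k+1}$ with $t_1=i_1$, $t_{k+1}=j_\ell$, such that for each $2\le q\le k$ some edge of $\alpha$ has range in $\{v_{t_q}\}\times\mathbb Z_r$, and all ranges of edges of $\alpha$ lie in $\bigcup_{q=1}^{k+1}\{v_{t_q}\}\times\mathbb Z_r$. For an integer $a$ coprime to $r$, $a^{-1}$ denotes any integer inverse of $a$ modulo $r$. *)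

From mathcomp Require Import all_boot all_order all_algebra.
Set Implicit Arguments. Unset Strict Implicit. Unset Printing Implicit Defensive.
Import GRing.Theory.
Local Open Scope ring_scope.

(* The graph L_{2n-1} x_m Z_r.  Vertices (v_i,k) with 1 <= i <= n, k : 'Z_r.
   An edge (e_{i,j},k) is encoded as the triple (i, j, k). *)
Definition edge (r : nat) : Type := (nat * nat * 'Z_r)%type.

Definition e_src (r : nat) (e : edge r) : nat := e.1.1.
Definition e_rng (r : nat) (e : edge r) : nat := e.1.2.
Definition e_lvl (r : nat) (e : edge r) : 'Z_r := e.2.

Definition is_edge (n : nat) (r : nat) (e : edge r) : bool :=
  (1 <= e_src e)%N && (e_src e <= e_rng e)%N && (e_rng e <= n)%N.

Definition src_vertex (r : nat) (m : nat -> nat) (e : edge r) : nat * 'Z_r :=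
  (e_src e, e_lvl e - (m (e_src e))%:R).
Definition rng_vertex (r : nat) (e : edge r) : nat * 'Z_r := (e_rng e, e_lvl e).

Definition adj (r : nat) (m : nat -> nat) (e1 e2 : edge r) : bool :=
  rng_vertex e1 == src_vertex m e2.

Definition is_path (n r : nat) (m : nat -> nat) (p : seq (edge r)) : bool :=
  (0 < size p)%N && all (@is_edge n r) p && sorted (@adj r m) p.

Definition edge0 (r : nat) : edge r := (0%N, 0%N, 0).

Definition zero_simple (n r : nat) (m : nat -> nat) (p : seq (edge r)) : Prop :=
  is_path n m p /\
  e_lvl (nth (edge0 r) p 0) = (m (e_src (nth (edge0 r) p 0)))%:R /\
  (forall a, (a < (size p).-1)%N -> e_lvl (nth (edge0 r) p a) != 0) /\
  e_lvl (nth (edge0 r) p (size p).-1) = 0.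

Definition p_start (r : nat) (p : seq (edge r)) : nat := e_src (nth (edge0 r) p 0).
Definition p_end (r : nat) (p : seq (edge r)) : nat :=
  e_rng (nth (edge0 r) p (size p).-1).

(* k-step: there are integers t_1 < ... < t_{k+1} (here t = [:: t_1; ...; t_{k+1}],
   0-based) with t_1 = i_1, t_{k+1} = j_l, each t_q (2 <= q <= k) is the range
   index of some edge of p, and all range indices of edges of p are among the t_q. *)
Definition kstep (r : nat) (k : nat) (p : seq (edge r)) : Prop :=
  exists t : seq nat,
    size t = k.+1 /\ sorted ltn t /\
    nth 0%N t 0 = p_start p /\ nth 0%N t k = p_end p /\
    (forall q, (1 <= q < k)%N -> exists2 e, e \in p & e_rng e = nth 0%N t q) /\
    (forall e, e \in p -> e_rng e \in t).

Definition has_card (T : eqType) (P : T -> Prop) (c : nat) : Prop :=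
  exists s : seq T, uniq s /\ (forall x, P x <-> x \in s) /\ size s = c.

Definition zs_from_to (n r : nat) (m : nat -> nat) (i j : nat) (p : seq (edge r)) : Prop :=
  zero_simple n m p /\ p_start p = i /\ p_end p = j.

From mathcomp Require Import all_boot all_order all_algebra.
From mathcomp Require Import ring zify.

(* A 0-simple path leaving (v_i, 0) is determined by the indices ws of the
   ranges of its edges: the level of an edge is the running sum of the m's of
   the sources so far, and the path is 0-simple iff this running sum in Z_r
   vanishes at the last edge and nowhere before.  Group the paths by the
   vertices i < v_1 < ... < v_k = j they visit.  At each vertex v the path
   loops; as m_v is a unit, from level L it can leave v after any number of
   loops smaller than the first e > 0 with L + e m_v = 0, and at the last
   vertex it loops exactly until that e.  Summing over these choices gives r
   paths through {i, j}, 1 + ... + (r - 1) = C(r, 2) paths through {i, x, j},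
   and, in Z_r, sum_(z < r) C(z, 2) m_(i+1) / m_(i+2) = C(r, 3) m_(i+1) / m_(i+2)
   paths through {i, i+1, i+2, i+3}.  Finally r, 2 C(r, 2) = r (r - 1) and
   3 C(r, 3) = r C(r - 1, 2) all vanish modulo r. *)

Set Implicit Arguments. Unset Strict Implicit. Unset Printing Implicit Defensive.
Import GRing.Theory.

Section StepsToZero.
Variable p : nat.
Local Notation r := p.+2.
Local Open Scope ring_scope.

Lemma natZp_unit k : coprime k r -> (k%:R : 'Z_r) \is a GRing.unit.
Proof. by move=> cop; rewrite unitZpE // coprime_sym. Qed.

Lemma natZp_inj a b : (a < r)%N -> (b < r)%N -> a%:R = b%:R :> 'Z_r -> a = b.
Proof. by move=> ar br /(congr1 (@nat_of_ord _)); rewrite !val_Zp_nat // !modn_small. Qed.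

Definition steps_to_zero (L : 'Z_r) (k : nat) : nat :=
  if L == 0 then r else val (- L / k%:R).

Lemma steps_to_zero0 k : steps_to_zero 0 k = r.
Proof. by rewrite /steps_to_zero eqxx. Qed.

Lemma steps_to_zeroE L k : L != 0 -> steps_to_zero L k = val (- L / k%:R).
Proof. by rewrite /steps_to_zero => /negbTE ->. Qed.

Section Coprime.
Variables (L : 'Z_r) (k : nat).
Hypothesis k_coprime : coprime k r.

Lemma steps_to_zero_gt0 : (0 < steps_to_zero L k)%N.
Proof.
rewrite /steps_to_zero; case: eqP => // /eqP L_neq0; rewrite lt0n.
apply: contra L_neq0 => /eqP val0.
have /eqP : - L / k%:R = 0 by exact: val_inj.
by rewrite mulIr_eq0 ?oppr_eq0 //; apply/mulIr; rewrite unitrV natZp_unit.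
Qed.

Lemma steps_to_zero_le : (steps_to_zero L k <= r)%N.
Proof. by rewrite /steps_to_zero; case: eqP => // _; exact: ltnW (ltn_ord _). Qed.

Lemma addr_steps_to_zero : L + (steps_to_zero L k)%:R * k%:R = 0.
Proof.
rewrite /steps_to_zero; case: eqP => [->|_]; first by rewrite pchar_Zp // mul0r addr0.
by rewrite natr_Zp divrK ?natZp_unit ?subrr.
Qed.

Lemma steps_to_zero_min e : (0 < e < steps_to_zero L k)%N -> L + e%:R * k%:R != 0.
Proof.
case/andP=> e_gt0 e_lt; apply/eqP => Le0.
have eE : e%:R = - L / k%:R.
  by rewrite -[e%:R](mulrK (natZp_unit k_coprime)) -[e%:R * _](addKr L) Le0 addr0.
have e_ltr : (e < r)%N := leq_trans e_lt steps_to_zero_le.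
move: e_lt; rewrite /steps_to_zero; case: eqP => [L0|_].
  by move: eE; rewrite L0 oppr0 mul0r -[0 in RHS]/(0%:R) => /natZp_inj; lia.
by rewrite -eE -[X in (_ < X)%N]/(nat_of_ord _) val_Zp_nat // modn_small // ltnn.
Qed.

Lemma steps_to_zeroP a : (0 < a)%N ->
  (L + a%:R * k%:R = 0 /\ forall e, (0 < e < a)%N -> L + e%:R * k%:R != 0)
  <-> a = steps_to_zero L k.
Proof.
move=> a_gt0; split=> [[La min]|->]; last first.
  by split; [exact: addr_steps_to_zero | exact: steps_to_zero_min].
case: (ltngtP a (steps_to_zero L k)) => // lt.
  by move: (steps_to_zero_min (e := a)); rewrite a_gt0 lt La eqxx => /(_ isT).
have := min (steps_to_zero L k); rewrite steps_to_zero_gt0 lt addr_steps_to_zero eqxx.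
by move/(_ isT).
Qed.

End Coprime.
End StepsToZero.

Section PathsOfRanges.
Variables (n p : nat) (m : nat -> nat).
Local Notation r := p.+2.
Local Open Scope ring_scope.

Fixpoint zero_simple_levels (v : nat) (L : 'Z_r) (ws : seq nat) : bool :=
  if ws is w :: ws' then
    if ws' is [::] then L + (m v)%:R == 0
    else (L + (m v)%:R != 0) && zero_simple_levels w (L + (m v)%:R) ws'
  else false.

Fixpoint path_of (v : nat) (L : 'Z_r) (ws : seq nat) : seq (edge r) :=
  if ws is w :: ws' then (v, w, L + (m v)%:R) :: path_of w (L + (m v)%:R) ws'
  else [::].

Lemma map_rng_path_of v L ws : map (@e_rng r) (path_of v L ws) = ws.
Proof. by elim: ws v L => //= w ws IH v L; rewrite IH. Qed.

Lemma size_path_of v L ws : size (path_of v L ws) = size ws.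
Proof. by rewrite -(size_map (@e_rng r)) map_rng_path_of. Qed.

Lemma path_of_inj v L : injective (path_of v L).
Proof. by move=> ws1 ws2 eq12; rewrite -(map_rng_path_of v L ws1) eq12 map_rng_path_of. Qed.

Lemma mem_rng_path_of v L ws w :
  (exists2 e, e \in path_of v L ws & e_rng e = w) <-> w \in ws.
Proof.
rewrite -{2}(map_rng_path_of v L ws); split; first by case=> e e_in <-; exact: map_f.
by case/mapP => e e_in ->; exists e.
Qed.

Lemma p_start_path_of v L ws : ws != [::] -> p_start (path_of v L ws) = v.
Proof. by case: ws. Qed.

Lemma p_end_path_of v L ws : ws != [::] -> p_end (path_of v L ws) = last v ws.
Proof.
move=> ws_ne0; rewrite /p_end size_path_of.
rewrite -(nth_map _ 0%N) ?size_path_of ?prednK ?lt0n ?size_eq0 //.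
by rewrite map_rng_path_of nth_last; case: ws ws_ne0.
Qed.

Lemma sorted_path_of v L ws : sorted (adj m) (path_of v L ws).
Proof.
have path_from e v' L' ws' : rng_vertex e = (v', L') -> path (adj m) e (path_of v' L' ws').
  by elim: ws' e v' L' => //= w ws' IH e v' L' eE; rewrite /adj eE /src_vertex /= addrK eqxx IH.
by case: ws => //= w ws; apply: path_from.
Qed.

Lemma all_is_edge_path_of v L ws : (1 <= v)%N ->
  all (@is_edge n r) (path_of v L ws) = path leq v ws && all (fun w => w <= n)%N ws.
Proof.
elim: ws v L => //= w ws IH v L v_gt0.
rewrite /is_edge /e_src /e_rng /= v_gt0 /=.
case: leqP => //= vw; rewrite IH ?(leq_trans v_gt0 vw) //.
by rewrite andbCA andbA.
Qed.

Lemma zero_simple_levelsP v L ws : reflect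
  [/\ (0 < size ws)%N,
      forall a, (a < (size ws).-1)%N -> e_lvl (nth (edge0 r) (path_of v L ws) a) != 0 &
      e_lvl (nth (edge0 r) (path_of v L ws) (size ws).-1) = 0]
  (zero_simple_levels v L ws).
Proof.
elim: ws v L => [|w [|w' ws] IH] v L /=; first by constructor; case.
  by apply: (iffP eqP) => [|[]] //; split.
apply: (iffP andP) => [[L'_neq0 /IH [_ lvl_neq0 lvl_last]]|[_ lvl_neq0 lvl_last]].
  by split=> // -[|a] //= /lvl_neq0.
split; first exact: (lvl_neq0 0%N).
by apply/IH; split=> // a ltn_a; apply: (lvl_neq0 a.+1).
Qed.

Lemma path_ofE e q L : sorted (adj m) (e :: q) ->
  e_lvl e = L + (m (e_src e))%:R -> e :: q = path_of (e_src e) L (map (@e_rng r) (e :: q)).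
Proof.
elim: q e L => [|e' q IH] [[i j] k] L; first by move=> _ /= ->.
move=> /andP [/eqP [jE kE] sorted_q] kL.
rewrite {1}(IH e' k) //; last by rewrite kE subrK.
by rewrite /= -jE -kL.
Qed.

Definition admissible (i : nat) (ws : seq nat) : bool :=
  [&& zero_simple_levels i 0 ws, path leq i ws & all (fun w => w <= n)%N ws].

Lemma admissible_neq0 i ws : admissible i ws -> ws != [::].
Proof. by case: ws. Qed.

Lemma zero_simple_startP i q : (1 <= i)%N ->
  (zero_simple n m q /\ p_start q = i) <-> exists2 ws, q = path_of i 0 ws & admissible i ws.
Proof.
move=> i_gt0; split.
  case: q => [|e q]; first by case=> -[/andP [/andP []]].
  case=> -[/andP [/andP [_ edges_q] sorted_q] [lvl_first [lvl_neq0 lvl_last]]] start.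
  have qE : e :: q = path_of i 0 (map (@e_rng r) (e :: q)).
    by rewrite -start; apply: path_ofE; rewrite // add0r.
  exists (map (@e_rng r) (e :: q)); first by rewrite {1}qE.
  rewrite /admissible -(all_is_edge_path_of 0) -?qE // edges_q andbT.
  by apply/zero_simple_levelsP; rewrite size_map -qE.
case=> ws -> /and3P [/zero_simple_levelsP [ws_gt0 lvl_neq0 lvl_last] path_ws le_ws].
split; last by case: ws ws_gt0 {lvl_neq0 lvl_last path_ws le_ws}.
split.
  by rewrite /is_path size_path_of ws_gt0 all_is_edge_path_of // path_ws le_ws sorted_path_of.
rewrite size_path_of; split=> //.
by case: ws ws_gt0 {lvl_neq0 lvl_last path_ws le_ws} => //= *; rewrite add0r.
Qed.

Lemma zs_from_toP i j q : (1 <= i)%N ->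
  zs_from_to n m i j q <-> exists2 ws, admissible i ws /\ last i ws = j & q = path_of i 0 ws.
Proof.
move=> i_gt0; split=> [[zs_q [start_q end_q]]|[ws [adm_ws last_ws] ->]].
  have [ws qE adm_ws] := proj1 (zero_simple_startP q i_gt0) (conj zs_q start_q).
  exists ws => //; split=> //.
  by rewrite -end_q qE p_end_path_of // (admissible_neq0 adm_ws).
have [] : zero_simple n m (path_of i 0 ws) /\ p_start (path_of i 0 ws) = i.
  by apply/zero_simple_startP => //; exists ws.
by split=> //; rewrite p_end_path_of // (admissible_neq0 adm_ws).
Qed.

End PathsOfRanges.

Definition visits (i : nat) (vs ws : seq nat) : bool :=
  all (fun w => w \in i :: vs) ws && all (fun v => v \in ws) vs.

Lemma visits_mem i vs ws : visits i vs ws -> i :: ws =i i :: vs.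
Proof.
case/andP=> /allP ws_sub /allP vs_sub x.
apply/idP/idP; rewrite in_cons => /predU1P [->|x_in]; rewrite ?mem_head //.
  exact: ws_sub.
by rewrite in_cons vs_sub ?orbT.
Qed.

Lemma leq_last i ws w : path leq i ws -> w \in i :: ws -> (w <= last i ws).
Proof.
elim: ws i w => [|x ws IH] i w /=; first by move=> _; rewrite mem_seq1 => /eqP ->.
case/andP=> le_ix path_ws; rewrite in_cons => /predU1P [->|]; last exact: IH.
exact: leq_trans le_ix (IH _ _ path_ws (mem_head _ _)).
Qed.

Lemma visits_last i vs ws : path leq i ws -> path ltn i vs -> visits i vs ws ->
  last i vs = last i ws.
Proof.
move=> ws_le vs_lt /visits_mem eq_mem.
have vs_le : path leq i vs by apply: sub_path vs_lt => x y /ltnW.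
apply/eqP; rewrite eqn_leq; apply/andP; split; apply: leq_last => //.
  by rewrite eq_mem mem_last.
by rewrite -eq_mem mem_last.
Qed.

Lemma visits_exists i ws : path leq i ws -> exists2 vs, path ltn i vs & visits i vs ws.
Proof.
elim: ws i => [|w ws IH] i /=; first by exists [::].
case/andP=> le_iw /IH [vs vs_lt]; rewrite /visits => /andP [/allP ws_sub /allP vs_sub].
have [eq_iw|ne_iw] := eqVneq i w.
  subst w; exists vs => //; rewrite /visits; apply/andP; split; apply/allP => x.
    by rewrite in_cons => /predU1P [->|/ws_sub]; rewrite ?mem_head.
  by move/vs_sub => x_ws; rewrite in_cons x_ws orbT.
exists (w :: vs); first by rewrite /= ltn_neqAle ne_iw le_iw.
rewrite /visits; apply/andP; split; apply/allP => x; rewrite !in_cons.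
  by case/predU1P => [->|/ws_sub]; rewrite ?eqxx ?orbT // in_cons => ->; rewrite orbT.
by case/predU1P => [->|/vs_sub ->]; rewrite ?eqxx ?orbT.
Qed.

Lemma visits_inj i vs1 vs2 ws : path ltn i vs1 -> path ltn i vs2 ->
  visits i vs1 ws -> visits i vs2 ws -> vs1 = vs2.
Proof.
move=> lt1 lt2 /visits_mem eq1 /visits_mem eq2.
have [] // : i :: vs1 = i :: vs2.
by apply: (irr_sorted_eq ltn_trans ltnn) => // x; rewrite -eq1 -eq2.
Qed.

Lemma size_leq_last i vs : path ltn i vs -> (i + size vs <= last i vs).
Proof.
elim: vs i => [|v vs IH] i /=; first by rewrite addn0.
by case/andP=> lt_iv /IH; lia.
Qed.

Lemma nseq_cat_inj (T : eqType) (x y : T) a b s t : y != x ->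
  nseq a x ++ y :: s = nseq b x ++ y :: t -> a = b /\ s = t.
Proof.
move=> ne_yx; elim: a b => [|a IH] [|b] /=; first by case.
- by case=> eq_yx; rewrite eq_yx eqxx in ne_yx.
- by case=> eq_xy; rewrite eq_xy eqxx in ne_yx.
- by case=> /IH [-> ->].
Qed.

Lemma path_nseq_cat (v v' a : nat) w :
  path leq v (nseq a v ++ v' :: w) = (v <= v') && path leq v' w.
Proof. by elim: a => //= a ->; rewrite leqnn. Qed.

Lemma nseq_cat_of_path v v' ws : path leq v ws -> v' \in ws ->
  {in ws, forall x, (x == v) || (v' <= x)} -> exists a w, ws = nseq a v ++ v' :: w.
Proof.
elim: ws => [|x ws IH] //= /andP [le_vx path_ws] v'_in x_ws.
have [<-|ne_xv'] := eqVneq x v'; first by exists 0, ws.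
have v'_ws : v' \in ws by move: v'_in; rewrite in_cons eq_sym (negbTE ne_xv').
have [eq_xv|ne_xv] := eqVneq x v.
  subst x; have [|a [w ->]] := IH path_ws v'_ws; last by exists a.+1, w.
  by move=> y y_in; apply: x_ws; rewrite in_cons y_in orbT.
have := x_ws x (mem_head _ _); rewrite (negbTE ne_xv) /= => le_v'x.
have le_xv' : (x <= v') := allP (order_path_min leq_trans path_ws) _ v'_ws.
by move: ne_xv'; rewrite eqn_leq le_xv' le_v'x.
Qed.

Lemma visits_nseq_cat v v' vs' a w : (v < v') -> path ltn v' vs' -> path leq v' w ->
  visits v (v' :: vs') (nseq a v ++ v' :: w) = visits v' vs' w.
Proof.
move=> lt_vv' vs'_lt w_le.
have w_ge := order_path_min leq_trans w_le; have vs'_gt := order_path_min ltn_trans vs'_lt.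
have vv'_nseq : all (fun x => x \in [:: v, v' & vs']) (nseq a v).
  by rewrite all_nseq mem_head orbT.
rewrite /visits all_cat vv'_nseq /= in_cons mem_head orbT /= mem_cat mem_head orbT /=.
congr andb; apply: eq_in_all => x x_in /=.
  by rewrite in_cons (gtn_eqF (leq_trans lt_vv' (allP w_ge x x_in))).
have lt_v'x := allP vs'_gt x x_in.
by rewrite mem_cat in_cons mem_nseq (gtn_eqF lt_v'x) (gtn_eqF (ltn_trans lt_vv' lt_v'x)) andbF.
Qed.

Section KStep.
Variables (p : nat) (m : nat -> nat).
Local Notation r := p.+2.
Local Open Scope ring_scope.

Lemma kstep_path_of k i ws vs : path leq i ws -> ws != [::] -> path ltn i vs ->
  visits i vs ws -> kstep k (path_of m i (0 : 'Z_r) ws) <-> size vs = k.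
Proof.
move=> ws_le ws_ne0 vs_lt vis; have eq_mem := visits_mem vis.
have vs_ws : {subset vs <= ws} by case/andP: vis => _ /allP.
rewrite /kstep p_start_path_of // p_end_path_of //; split.
  case=> t [size_t [sorted_t [t0 [tk [mid rng]]]]].
  suff tE : t = i :: vs by move: size_t; rewrite tE => -[].
  apply: (irr_sorted_eq ltn_trans ltnn) => // x; apply/idP/idP => [x_t|].
    rewrite -eq_mem -(nth_index 0 x_t).
    have : (index x t <= k)%N by rewrite -ltnS -size_t index_mem.
    case: (index x t) => [_|q le_qk]; first by rewrite t0 mem_head.
    have [->|lt_qk] := eqVneq q.+1 k; first by rewrite tk mem_last.
    have lt_q1k : (1 <= q.+1 < k)%N by lia.
    have [e e_in <-] := mid q.+1 lt_q1k.
    by rewrite in_cons -(map_rng_path_of m i (0 : 'Z_r) ws) map_f ?orbT.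
  rewrite -eq_mem in_cons => /predU1P [->|x_ws]; first by rewrite -t0 mem_nth // size_t.
  by have [e e_in <-] := proj2 (mem_rng_path_of m i (0 : 'Z_r) ws x) x_ws; apply: rng.
move=> size_vs; exists (i :: vs); split; first by rewrite /= size_vs.
split=> //; split=> //; split.
  by rewrite -size_vs -[size vs]/((size (i :: vs)).-1) nth_last /= (visits_last ws_le).
split=> [q /andP [q_gt0 lt_qk]|e e_in].
  apply/mem_rng_path_of/vs_ws; case: q q_gt0 lt_qk => //= q _ lt_qk.
  by rewrite mem_nth // size_vs ltnW.
by rewrite -eq_mem in_cons -(map_rng_path_of m i (0 : 'Z_r) ws) map_f ?orbT.
Qed.

End KStep.

Section Walks.
Variables (p : nat) (m : nat -> nat).
Local Notation r := p.+2.
Local Open Scope ring_scope.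
Local Notation M v := ((m v)%:R : 'Z_r).

Lemma addr_natS (L x : 'Z_r) e : L + e%:R * x + x = L + e.+1%:R * x.
Proof. by rewrite -natr1; ring. Qed.

Lemma zero_simple_levels_nseq_catP v (L : 'Z_r) a w ws :
  zero_simple_levels m v L (nseq a v ++ w :: ws) <->
  (forall e, (0 < e <= a)%N -> L + e%:R * M v != 0) /\
  zero_simple_levels m v (L + a%:R * M v) (w :: ws).
Proof.
elim: a L => [|a IH] L; first by rewrite mul0r addr0; split=> [|[]//]; split=> // e; lia.
have -> : zero_simple_levels m v L (nseq a.+1 v ++ w :: ws) =
          (L + M v != 0) && zero_simple_levels m v (L + M v) (nseq a v ++ w :: ws).
  by case: a {IH}.
have shift e : L + M v + e%:R * M v = L + e.+1%:R * M v by rewrite -addr_natS; ring.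
split=> [/andP [L1_neq0 /IH [neq0 zs]]|[neq0 zs]]; last first.
  have := neq0 1%N isT; rewrite mul1r => -> /=.
  by apply/IH; rewrite shift; split=> // e e_le; rewrite shift neq0 //; lia.
split; last by rewrite -shift.
case=> [|[|e]] //= e_le; first by rewrite mul1r.
by rewrite -shift; apply: neq0; lia.
Qed.

Lemma zero_simple_levels_nseqP v (L : 'Z_r) a :
  zero_simple_levels m v L (nseq a v) <->
  [/\ (0 < a)%N, forall e, (0 < e < a)%N -> L + e%:R * M v != 0 & L + a%:R * M v = 0].
Proof.
case: a => [|a]; first by split=> // -[].
rewrite -addn1 nseqD zero_simple_levels_nseq_catP /= addr_natS addn1.
split=> [[neq0 /eqP]|[_ neq0 ->]]; first by split=> // e e_lt; apply: neq0; lia.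
by split=> // e e_le; apply: neq0; lia.
Qed.

Lemma zero_simple_levels_nseq v (L : 'Z_r) a : coprime (m v) r ->
  zero_simple_levels m v L (nseq a v) = (a == steps_to_zero L (m v)).
Proof.
move=> v_coprime; apply/idP/eqP.
  by case/zero_simple_levels_nseqP=> a_gt0 neq0 eq0; apply/steps_to_zeroP.
move=> ->; apply/zero_simple_levels_nseqP; split.
- exact: steps_to_zero_gt0.
- exact: steps_to_zero_min.
- exact: addr_steps_to_zero.
Qed.

Lemma zero_simple_levels_jump v (L : 'Z_r) a v' w : coprime (m v) r ->
  zero_simple_levels m v L (nseq a v ++ v' :: w) =
  (a < steps_to_zero L (m v))%N && zero_simple_levels m v (L + a%:R * M v) [:: v' & w].
Proof.
move=> v_coprime; apply/idP/andP; rewrite zero_simple_levels_nseq_catP.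
  case=> neq0 ->; split=> //; rewrite ltnNge; apply/negP => le_sa.
  have := neq0 (steps_to_zero L (m v)); rewrite addr_steps_to_zero // eqxx.
  by rewrite le_sa andbT (steps_to_zero_gt0 L v_coprime) => /(_ isT).
by case=> lt_as ->; split=> // e e_le; apply: steps_to_zero_min => //; lia.
Qed.

(* The range sequences of the walks that leave [v] at level [L] and then visit
   exactly the vertices [vs]: loop [a] times at [v], move to [v'], and stop
   there if [v'] is entered at level 0. *)
Fixpoint walks (L : 'Z_r) (v : nat) (vs : seq nat) : seq (seq nat) :=
  if vs is v' :: vs' then
    [seq nseq a v ++ v' :: w | a <- iota 0 (steps_to_zero L (m v)),
       w <- if L + a.+1%:R * M v == 0 then (if vs' is [::] then [:: [::]] else [::])
            else walks (L + a.+1%:R * M v) v' vs']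
  else [:: nseq (steps_to_zero L (m v)) v].

Lemma mem_walks_nil (L : 'Z_r) v ws : coprime (m v) r ->
  (ws \in walks L v [::]) = [&& zero_simple_levels m v L ws, path leq v ws & visits v [::] ws].
Proof.
move=> v_coprime; rewrite mem_seq1.
have -> : visits v [::] ws = all (pred1 v) ws.
  by rewrite /visits andbT; apply: eq_all => x; rewrite mem_seq1.
apply/eqP/and3P => [->|[zs _ /all_pred1P wsE]].
  rewrite zero_simple_levels_nseq // all_pred1_nseq; split=> //.
  by elim: (steps_to_zero _ _) => //= a ->; rewrite leqnn.
by move: zs; rewrite wsE zero_simple_levels_nseq // => /eqP <-.
Qed.

Lemma mem_walks_cons (L : 'Z_r) v v' vs' ws :
  (v < v')%N -> path ltn v' vs' -> coprime (m v) r ->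
  (forall L' w, (w \in walks L' v' vs') =
     [&& zero_simple_levels m v' L' w, path leq v' w & visits v' vs' w]) ->
  (ws \in walks L v (v' :: vs')) =
  [&& zero_simple_levels m v L ws, path leq v ws & visits v (v' :: vs') ws].
Proof.
move=> lt_vv' vs'_lt v_coprime mem_walks'.
have mem_cont a w : (w \in if L + a.+1%:R * M v == 0 then (if vs' is [::] then [:: [::]] else [::])
                           else walks (L + a.+1%:R * M v) v' vs') =
    [&& zero_simple_levels m v (L + a%:R * M v) (v' :: w), path leq v' w & visits v' vs' w].
  rewrite /= addr_natS; case: eqP => [->|/eqP L'_neq0]; last first.
    by rewrite mem_walks'; case: w => //=; rewrite (negbTE L'_neq0).
  by case: w => [|x w]; case: vs' {vs'_lt mem_walks'} => //=; rewrite ?andbF.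
apply/allpairsPdep/and3P => [[a [w [a_lt w_in ->]]]|[zs ws_le vis]].
  move: a_lt w_in; rewrite mem_iota leq0n add0n andTb mem_cont => a_lt /and3P [zs w_le vis].
  rewrite zero_simple_levels_jump // a_lt zs path_nseq_cat w_le (ltnW lt_vv').
  by rewrite visits_nseq_cat.
have [a [w wsE]] : exists a w, ws = nseq a v ++ v' :: w.
  case/andP: vis => /allP ws_sub /allP vs_sub.
  apply: nseq_cat_of_path ws_le (vs_sub _ (mem_head _ _)) _ => x /ws_sub.
  rewrite !in_cons => /or3P [->|/eqP ->|x_vs']; rewrite ?leqnn ?orbT //.
  by rewrite ltnW ?orbT // (allP (order_path_min ltn_trans vs'_lt)).
move: zs ws_le vis; rewrite wsE zero_simple_levels_jump // path_nseq_cat.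
case/andP=> a_lt zs /andP [_ w_le]; rewrite visits_nseq_cat // => vis.
by exists a, w; rewrite mem_iota leq0n add0n andTb mem_cont zs w_le vis.
Qed.

Lemma mem_walks (L : 'Z_r) v vs ws : path ltn v vs ->
  all (fun x => coprime (m x) r) (v :: vs) ->
  (ws \in walks L v vs) = [&& zero_simple_levels m v L ws, path leq v ws & visits v vs ws].
Proof.
elim: vs v L ws => [|v' vs' IH] v L ws; first by move=> _ /andP [? _]; apply: mem_walks_nil.
case/andP=> lt_vv' vs'_lt /andP [v_coprime vs_coprime].
by apply: mem_walks_cons => // L' w; apply: IH.
Qed.

Lemma uniq_walks (L : 'Z_r) v vs : path ltn v vs -> uniq (walks L v vs).
Proof.
elim: vs v L => [|v' vs' IH] v L //= /andP [lt_vv' vs'_lt].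
apply: allpairs_uniq_dep => [|a _|[a w] [b w'] _ _ /= /nseq_cat_inj []]; rewrite ?iota_uniq //.
- by case: ifP => _; [case: (vs') | exact: IH].
- by rewrite gtn_eqF.
- by move=> eq_ab eq_ww'; subst.
Qed.

Lemma size_walks1 (L : 'Z_r) v v' : size (walks L v [:: v']) = steps_to_zero L (m v).
Proof.
rewrite size_allpairs_dep sumnE big_map -[RHS](size_iota 0) -sum1_size.
by apply: eq_bigr => a _; case: ifP.
Qed.

Lemma size_walks_cons2 (L : 'Z_r) v v' v'' vs : size (walks L v [:: v', v'' & vs]) =
  (\sum_(a < steps_to_zero L (m v))
     if (L + a.+1%:R * M v == 0)%R then 0
     else size (walks (L + a.+1%:R * M v)%R v' (v'' :: vs)))%N.
Proof.
rewrite size_allpairs_dep sumnE big_map.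
rewrite [iota _ _](_ : _ = index_iota 0 (steps_to_zero L (m v))) ?big_mkord; last first.
  by rewrite /index_iota subn0.
by apply: eq_bigr => a _; case: ifP.
Qed.

Lemma size_walks2 (L : 'Z_r) v v' v'' : coprime (m v') r ->
  size (walks L v [:: v'; v'']) =
  (\sum_(a < steps_to_zero L (m v)) val (- (L + a.+1%:R * M v) / M v')%R)%N.
Proof.
move=> v'_coprime; rewrite size_walks_cons2; apply: eq_bigr => a _.
by case: eqP => [->|/eqP L'_neq0]; rewrite ?oppr0 ?mul0r // size_walks1 steps_to_zeroE.
Qed.

End Walks.

Lemma sum_bin2_rev z : \sum_(b < z) (z - b.+1) = 'C(z, 2).
Proof. by rewrite -bin2_sum big_rev_mkord subn0. Qed.

Lemma sum_bin2 z : \sum_(i < z) 'C(i, 2) = 'C(z, 3).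
Proof. by elim: z => [|z IH]; rewrite ?big_ord0 // big_ord_recr IH binS. Qed.

Section Counting.
Variables (p : nat) (m : nat -> nat).
Local Notation r := p.+2.
Local Open Scope ring_scope.
Local Notation M v := ((m v)%:R : 'Z_r).

Lemma sum_affine_Zp (g : nat -> nat) (c d : 'Z_r) :
  c \is a GRing.unit -> d \is a GRing.unit ->
  (\sum_(a < r) g (val (- (a.+1%:R * c) / d)) = \sum_(i < r) g i)%N.
Proof.
move=> c_unit d_unit.
have h_inj : injective (fun a : 'I_r => - (a.+1%:R * c) / d : 'I_r).
  have dV_unit : d^-1 \is a GRing.unit by rewrite unitrV.
  move=> a b /(mulIr dV_unit)/oppr_inj/(mulIr c_unit).
  by rewrite -!natr1 => /addIr/natZp_inj eq_ab; apply/val_inj/eq_ab.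
by rewrite [RHS](reindex_inj h_inj).
Qed.

Lemma size_walks0_1 v v' : size (walks m (0 : 'Z_r) v [:: v']) = r.
Proof. by rewrite size_walks1 steps_to_zero0. Qed.

Lemma size_walks0_2 v v' v'' : coprime (m v) r -> coprime (m v') r ->
  size (walks m (0 : 'Z_r) v [:: v'; v'']) = 'C(r, 2).
Proof.
move=> v_coprime v'_coprime; rewrite size_walks2 // steps_to_zero0.
under eq_bigr do rewrite add0r.
by rewrite (sum_affine_Zp id) ?natZp_unit // -bin2_sum big_mkord.
Qed.

Lemma size_walks2_Zp (L : 'Z_r) v' v'' v''' :
  L != 0 -> coprime (m v') r -> coprime (m v'') r ->
  (size (walks m L v' [:: v''; v''']))%:R = 'C(val (- L / M v'), 2)%:R * (M v' / M v'').
Proof.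
move=> L_neq0 v'_coprime v''_coprime.
rewrite size_walks2 // steps_to_zeroE // -sum_bin2_rev !natr_sum mulr_suml.
set z := val (- L / M v').
have LE : L = - (z%:R * M v') by rewrite natr_Zp divrK ?natZp_unit ?opprK.
apply: eq_bigr => b _; rewrite natr_Zp natrB // {1}LE; ring.
Qed.

Lemma size_walks0_3_Zp v v' v'' v''' :
  coprime (m v) r -> coprime (m v') r -> coprime (m v'') r ->
  (size (walks m (0 : 'Z_r) v [:: v'; v''; v''']))%:R = 'C(r, 3)%:R * (M v' / M v'').
Proof.
move=> v_coprime v'_coprime v''_coprime.
rewrite size_walks_cons2 steps_to_zero0 -sum_bin2.
rewrite -(sum_affine_Zp (fun i => 'C(i, 2)) (natZp_unit v_coprime) (natZp_unit v'_coprime)).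
rewrite !natr_sum mulr_suml.
apply: eq_bigr => a _; rewrite add0r; case: eqP => [->|/eqP L_neq0].
  by rewrite oppr0 mul0r.
by rewrite size_walks2_Zp.
Qed.

End Counting.

Lemma chain1P i j vs : path ltn i vs -> last i vs = j ->
  (vs \in [:: [:: j]]) = (size vs == 1).
Proof.
by case: vs => [|a [|b vs]] //= _ => [<-|_]; rewrite mem_seq1 ?eqxx // eqseq_cons andbF.
Qed.

Lemma chain2P i j vs : path ltn i vs -> last i vs = j ->
  (vs \in [seq [:: x; j] | x <- iota i.+1 (j - i - 1)]) = (size vs == 2).
Proof.
move=> vs_lt last_vs; apply/mapP/eqP => [[x _ ->] //|].
case: vs vs_lt last_vs => [|a [|b [|c vs]]] //= /and3P [lt_ia lt_ab _] <- _.
by exists a; rewrite // mem_iota; lia.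
Qed.

Lemma chain3P i vs : path ltn i vs -> last i vs = i + 3 ->
  (vs \in [:: [:: i + 1; i + 2; i + 3]]) = (size vs == 3).
Proof.
move=> vs_lt last_vs; rewrite mem_seq1; apply/eqP/eqP => [-> //|].
case: vs vs_lt last_vs => [|a [|b [|c [|d vs]]]] //= /and4P [lt_ia lt_ab lt_bc _] eq_c _.
by rewrite eq_c; congr [:: _; _; _]; lia.
Qed.

Lemma chains_to_2 i vs : path ltn i vs -> last i vs = i + 2 ->
  vs \in [:: [:: i + 2]; [:: i + 1; i + 2]].
Proof.
move=> vs_lt last_vs; have := size_leq_last vs_lt; rewrite last_vs.
case: vs vs_lt last_vs => [|a [|b [|c vs]]] /=; try lia.
  by move=> _ -> _; rewrite mem_head.
move=> /and3P [lt_ia lt_ab _] eq_b _; rewrite eq_b (_ : a = i + 1) ?inE ?eqxx ?orbT //; lia.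
Qed.

Lemma chains_to_3 i vs : path ltn i vs -> last i vs = i + 3 ->
  vs \in [:: [:: i + 3]; [:: i + 1; i + 3]; [:: i + 2; i + 3]; [:: i + 1; i + 2; i + 3]].
Proof.
move=> vs_lt last_vs; have := size_leq_last vs_lt; rewrite last_vs.
case: vs vs_lt last_vs => [|a [|b [|c [|d vs]]]] /=; try lia.
- by move=> _ -> _; rewrite mem_head.
- move=> /and3P [lt_ia lt_ab _] eq_b _; rewrite eq_b !inE.
  have : a = i + 1 \/ a = i + 2 by lia.
  by case=> ->; rewrite eqxx ?orbT.
- move=> /and4P [lt_ia lt_ab lt_bc _] eq_c _; rewrite eq_c.
  by rewrite (_ : a = i + 1) 1?(_ : b = i + 2) ?inE ?eqxx ?orbT //; lia.
Qed.

Section ModularArithmetic.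
Variable p : nat.
Local Notation r := p.+2.
Local Open Scope ring_scope.

Lemma bin2_Zp_double : 'C(r, 2)%:R + 'C(r, 2)%:R = 0 :> 'Z_r.
Proof. by rewrite -natrD addnn -mul2n -mul_bin_diag natrM pchar_Zp // mul0r. Qed.

Lemma bin3_Zp : 'C(r, 3)%:R = - ((r * (r - 1) * (r - 2)) %/ 3)%:R :> 'Z_r.
Proof.
have -> : ((r * (r - 1) * (r - 2)) %/ 3 = 'C(r, 3) * 2)%N.
  have ffact3 : (r ^_ 3 = r * (r - 1) * (r - 2))%N by rewrite !ffactnSr ffactn0 mul1n subn0.
  by rewrite -ffact3 -bin_ffact (_ : 3`! = 2 * 3)%N // mulnA mulnK.
apply/eqP; rewrite -addr_eq0 -natrD (_ : 'C(r, 3) + _ = 3 * 'C(r, 3))%N; last lia.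
by rewrite -mul_bin_diag natrM pchar_Zp // mul0r.
Qed.

Lemma intr_Zp_eq0 (c : int) : (c%:~R == 0 :> 'Z_r) = (r %| c)%Z.
Proof.
have nat_case k : ((k%:Z)%:~R == 0 :> 'Z_r) = (r %| k%:Z)%Z.
  by rewrite dvdzE /= -(inj_eq val_inj) /= val_Zp_nat.
by case: c => k; rewrite ?NegzE ?intrN ?oppr_eq0 nat_case // !dvdzE abszN.
Qed.

Lemma eqZp_int (a b : int) : a%:~R = b%:~R :> 'Z_r <-> (a = b %[mod r])%Z.
Proof.
rewrite (rwP eqP) -subr_eq0 -intrB intr_Zp_eq0 -eqz_mod_dvd.
by split=> /eqP.
Qed.

Lemma bin3_ratio_modz (c a b : nat) (u : int) :
  c%:R = 'C(r, 3)%:R * (a%:R / b%:R) :> 'Z_r -> (u * b%:Z = 1 %[mod r])%Z ->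
  (c%:Z = - u * a%:Z * ((r * (r - 1) * (r - 2)) %/ 3)%N%:Z %[mod r])%Z.
Proof.
move=> cE /eqZp_int; rewrite intrM => ub1.
have {}ub1 : u%:~R * b%:R = 1 :> 'Z_r := ub1.
have uE : (b%:R : 'Z_r)^-1 = u%:~R by apply: mulr1_eq; rewrite mulrC.
apply/eqZp_int; rewrite !intrM intrN -uE -!pmulrn /= cE bin3_Zp; ring.
Qed.

End ModularArithmetic.

Section ZeroSimplePaths.
Variables (n p : nat) (m : nat -> nat).
Local Notation r := p.+2.
Hypothesis m_coprime : forall i, 1 <= i <= n -> coprime (m i) r.
Local Notation path0 i ws := (path_of m i (0%R : 'Z_r) ws).
Local Notation walks0 i vs := (walks m (0%R : 'Z_r) i vs).

Lemma zs_kstep_path_of k i j ws vs : 1 <= i -> admissible n p m i ws -> last i ws = j ->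
  path ltn i vs -> visits i vs ws ->
  zs_from_to n m i j (path0 i ws) /\ kstep k (path0 i ws)
  <-> size vs = k.
Proof.
move=> i_gt0 adm last_ws vs_lt vis; have /and3P [_ ws_le _] := adm.
have kstepE := kstep_path_of p m k ws_le (admissible_neq0 adm) vs_lt vis.
split=> [[_ /kstepE] //|/kstepE kstep_ws]; split=> //.
by apply/zs_from_toP => //; exists ws.
Qed.

Lemma has_card_zs_from_to i j (S : seq (seq nat)) (P : seq (edge r) -> Prop) c :
  1 <= i -> j <= n -> uniq S ->
  {in S, forall vs, path ltn i vs /\ last i vs = j} ->
  (forall q, P q -> zs_from_to n m i j q) ->
  (forall ws vs, admissible n p m i ws -> last i ws = j -> path ltn i vs -> last i vs = j ->
     visits i vs ws -> P (path0 i ws) <-> vs \in S) ->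
  \sum_(vs <- S) size (walks0 i vs) = c ->
  has_card P c.
Proof.
move=> i_gt0 le_jn S_uniq S_chain P_zs P_S <-.
have S_bounded vs : vs \in S -> {in i :: vs, forall x, 1 <= x <= n}.
  move=> /S_chain [vs_lt last_vs] x x_in; apply/andP; split.
    move: x_in; rewrite in_cons => /predU1P [->//|].
    by move/(allP (order_path_min ltn_trans vs_lt)); lia.
  by rewrite (leq_trans _ le_jn) // -last_vs leq_last // (sub_path _ vs_lt) // => ? ? /ltnW.
have mem_walks0 (vs ws : seq nat) : vs \in S -> (ws \in walks0 i vs) =
    [&& zero_simple_levels m i (0%R : 'Z_r) ws, path leq i ws & visits i vs ws].
  move=> vs_in; have [vs_lt _] := S_chain vs vs_in.
  rewrite mem_walks //.
  by apply/allP => x /(S_bounded vs vs_in)/m_coprime.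
exists [seq path0 i ws | vs <- S, ws <- walks0 i vs].
split; [|split].
- apply: allpairs_uniq_dep => // [vs /S_chain [vs_lt _]|]; first exact: uniq_walks.
  move=> t1 t2 /allpairsPdep [vs1 [ws1 [vs1_in ws1_in ->]]].
  move=> /allpairsPdep [vs2 [ws2 [vs2_in ws2_in ->]]] /= /path_of_inj eq_ws; subst ws2.
  move: ws1_in ws2_in; rewrite !mem_walks0 // => /and3P [_ _ vis1] /and3P [_ _ vis2].
  have [vs1_lt _] := S_chain _ vs1_in; have [vs2_lt _] := S_chain _ vs2_in.
  by rewrite (visits_inj vs1_lt vs2_lt vis1 vis2).
- move=> q; split=> [Pq|/allpairsPdep [vs [ws [vs_in ws_in ->]]]].
    have [ws [adm_ws last_ws] qE] := proj1 (zs_from_toP n m j q i_gt0) (P_zs q Pq).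
    have /and3P [zs_ws ws_le _] := adm_ws.
    have [vs vs_lt vis] := visits_exists ws_le.
    have last_vs : last i vs = j by rewrite (visits_last ws_le vs_lt vis).
    have vs_in : vs \in S by apply/(P_S ws vs) => //; rewrite -qE.
    by apply/allpairsPdep; exists vs, ws; rewrite mem_walks0 // zs_ws ws_le vis.
  move: ws_in; rewrite mem_walks0 // => /and3P [zs_ws ws_le vis].
  have [vs_lt last_vs] := S_chain vs vs_in.
  have last_ws : last i ws = j by rewrite -(visits_last ws_le vs_lt vis).
  apply/(P_S ws vs) => //; rewrite /admissible zs_ws ws_le /=.
  apply/allP => w w_in; have := S_bounded vs vs_in w.
  by rewrite -(visits_mem vis) in_cons w_in orbT => /(_ isT) /andP [].
- by rewrite size_allpairs_dep sumnE big_map.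
Qed.

Lemma card_kstep1 i j : 1 <= i -> i < j <= n ->
  has_card (fun q : seq (edge r) => zs_from_to n m i j q /\ kstep 1 q) r.
Proof.
move=> i_gt0 /andP [lt_ij le_jn].
apply: (has_card_zs_from_to (i := i) (j := j) (S := [:: [:: j]])) => //.
- by move=> vs; rewrite mem_seq1 => /eqP ->; split; rewrite /= ?andbT.
- by move=> q [].
- move=> ws vs adm last_ws vs_lt last_vs vis.
  by rewrite (chain1P vs_lt last_vs) -(rwP eqP); apply: zs_kstep_path_of.
- by rewrite big_seq1 size_walks0_1.
Qed.

Lemma card_kstep2 i j : 1 <= i -> i + 2 <= j <= n ->
  has_card (fun q : seq (edge r) => zs_from_to n m i j q /\ kstep 2 q) ('C(r, 2) * (j - i - 1)).
Proof.
move=> i_gt0 /andP [lt_ij le_jn].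
apply: (has_card_zs_from_to (i := i) (j := j)
          (S := [seq [:: x; j] | x <- iota i.+1 (j - i - 1)])) => //.
- by rewrite map_inj_uniq ?iota_uniq // => x y [->].
- by move=> vs /mapP [x]; rewrite mem_iota => x_in ->; rewrite /= !andbT; split=> //; lia.
- by move=> q [].
- move=> ws vs adm last_ws vs_lt last_vs vis.
  by rewrite (chain2P vs_lt last_vs) -(rwP eqP); apply: zs_kstep_path_of.
rewrite big_map (eq_big_seq (fun=> 'C(r, 2))) => [|x]; last first.
  by rewrite mem_iota => x_in; apply: size_walks0_2; apply: m_coprime; lia.
by rewrite big_const_seq count_predT size_iota iter_addn_0 mulnC.
Qed.

Lemma card_kstep3 i : 1 <= i -> i + 3 <= n ->
  exists c, has_card (fun q : seq (edge r) => zs_from_to n m i (i + 3) q /\ kstep 3 q) c /\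
    (c%:R = 'C(r, 3)%:R * ((m (i + 1))%:R / (m (i + 2))%:R) :> 'Z_r)%R.
Proof.
move=> i_gt0 le_n; exists (size (walks0 i [:: i + 1; i + 2; i + 3])); split.
  apply: (has_card_zs_from_to (i := i) (j := i + 3) (S := [:: [:: i + 1; i + 2; i + 3]])) => //.
  - by move=> vs; rewrite mem_seq1 => /eqP -> /=; split=> //; apply/and4P; split=> //; lia.
  - by move=> q [].
  - move=> ws vs adm last_ws vs_lt last_vs vis.
    by rewrite (chain3P vs_lt last_vs) -(rwP eqP); apply: zs_kstep_path_of.
  - by rewrite big_seq1.
by apply: size_walks0_3_Zp; apply: m_coprime; lia.
Qed.

Lemma card_zs_from_to2 i : 1 <= i -> i + 2 <= n ->
  has_card (@zs_from_to n r m i (i + 2)) 'C(r.+1, 2).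
Proof.
move=> i_gt0 le_n.
apply: (has_card_zs_from_to (i := i) (j := i + 2) (S := [:: [:: i + 2]; [:: i + 1; i + 2]])) => //.
- by rewrite /= inE eqseq_cons andbF.
- by move=> vs; rewrite !inE => /orP [] /eqP -> /=; split=> //; rewrite ?andbT; lia.
- move=> ws vs adm last_ws vs_lt last_vs vis.
  by split=> _; [apply: chains_to_2 | apply/zs_from_toP => //; exists ws].
rewrite big_cons big_seq1 size_walks0_1 size_walks0_2; first by rewrite [in RHS]binS bin1 addnC.
all: by apply: m_coprime; lia.
Qed.

Lemma card_zs_from_to3 i : 1 <= i -> i + 3 <= n ->
  exists c, has_card (@zs_from_to n r m i (i + 3)) c /\
    (c%:R = 'C(r, 3)%:R * ((m (i + 1))%:R / (m (i + 2))%:R) :> 'Z_r)%R.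
Proof.
move=> i_gt0 le_n.
set S := [:: [:: i + 3]; [:: i + 1; i + 3]; [:: i + 2; i + 3]; [:: i + 1; i + 2; i + 3]].
exists (\sum_(vs <- S) size (walks0 i vs)); split.
  apply: (has_card_zs_from_to (i := i) (j := i + 3) (S := S)) => //.
  - by rewrite /= !inE !eqseq_cons /=; lia.
  - by move=> vs; rewrite !inE => /or4P [] /eqP -> /=; split=> //; rewrite ?andbT; lia.
  - move=> ws vs adm last_ws vs_lt last_vs vis.
    by split=> _; [apply: chains_to_3 | apply/zs_from_toP => //; exists ws].
rewrite !big_cons big_nil addn0 size_walks0_1 !size_walks0_2; try by apply: m_coprime; lia.
rewrite natrD [X in (_ + X)%R]natrD [X in (_ + (_ + X))%R]natrD.
rewrite [X in (X + _)%R]pchar_Zp // add0r addrA bin2_Zp_double add0r.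
by apply: size_walks0_3_Zp; apply: m_coprime; lia.
Qed.

End ZeroSimplePaths.

Theorem lemma7p5 (n r : nat) (m : nat -> nat) :
  (2 <= r)%N ->
  (forall i, (1 <= i <= n)%N -> coprime (m i) r) ->
  (* (i) *)
  (forall i j, (1 <= i)%N -> (i + 1 <= j <= n)%N ->
     has_card (fun p : seq (edge r) => zs_from_to n m i j p /\ kstep 1 p) r) /\
  (* (ii) *)
  (forall i j, (1 <= i)%N -> (i + 2 <= j <= n)%N ->
     has_card (fun p : seq (edge r) => zs_from_to n m i j p /\ kstep 2 p)
              ((r * (r - 1)) %/ 2 * (j - i - 1))) /\
  (* (iii) *)
  (forall i, (1 <= i)%N -> (i + 3 <= n)%N ->
     exists c, has_card (fun p : seq (edge r) => zs_from_to n m i (i + 3) p /\ kstep 3 p) c /\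
       forall u : int, (u * (m (i + 2))%:Z = 1 %[mod r%:Z])%Z ->
         (c%:Z = - u * (m (i + 1))%:Z * ((r * (r - 1) * (r - 2)) %/ 3)%N%:Z
            %[mod r%:Z])%Z) /\
  (* consequences *)
  (forall i, (1 <= i)%N -> (i + 2 <= n)%N ->
     has_card (fun p : seq (edge r) => zs_from_to n m i (i + 2) p) ((r * (r + 1)) %/ 2)) /\
  (forall i, (1 <= i)%N -> (i + 3 <= n)%N ->
     exists c, has_card (fun p : seq (edge r) => zs_from_to n m i (i + 3) p) c /\
       forall u : int, (u * (m (i + 2))%:Z = 1 %[mod r%:Z])%Z ->
         (c%:Z = - u * (m (i + 1))%:Z * ((r * (r - 1) * (r - 2)) %/ 3)%N%:Z
            %[mod r%:Z])%Z).
Proof.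
case: r => [|[|p]] // _ m_coprime.
have bin2E : (p.+2 * (p.+2 - 1)) %/ 2 = 'C(p.+2, 2) by rewrite bin2 -divn2 subn1.
have bin2SE : (p.+2 * (p.+2 + 1)) %/ 2 = 'C(p.+3, 2) by rewrite bin2 -divn2 mulnC addn1.
split; first by move=> i j i_gt0; rewrite addn1; apply: card_kstep1.
split; first by move=> i j; rewrite bin2E; apply: card_kstep2.
split.
  move=> i i_gt0 le_n; have [c [card_c cE]] := card_kstep3 m_coprime i_gt0 le_n.
  by exists c; split=> // u; apply: bin3_ratio_modz.
split; first by move=> i i_gt0 le_n; rewrite bin2SE; apply: card_zs_from_to2.
move=> i i_gt0 le_n; have [c [card_c cE]] := card_zs_from_to3 m_coprime i_gt0 le_n.
by exists c; split=> // u; apply: bin3_ratio_modz.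
Qed.
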